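(* Let $(s,g)\in\mathcal{S}\times\mathcal{S}$ with $s\neq g$. Assume the local embedding error is bounded as $$\sup_{s'\in N(s)\cup\{s\}}\bigl|d^*(s',g)-\|\phi(s')-\phi(g)\|\bigr|\le\epsilon_e,$$ and the directional movement error is bounded as $\|z'^*(s,g)-\hat z'(s,g)\|\le\epsilon_d$. If $4\epsilon_e+\epsilon_d<1$, then $\hat\pi(s,g)$ is an optimal action at $(s,g)$, i.e. $d^*(p(s,\hat\pi(s,g)),g)=d^*(s,g)-1$.
   Context: Consider a deterministic Markov decision process with state space $\mathcal{S}$, action space $\mathcal{A}$ and deterministic transition function $p:\mathcal{S}\times\mathcal{A}\to\mathcal{S}$. Let $d^*:\mathcal{S}\times\mathcal{S}\to\mathbb{R}$ be the optimal temporal distance: $d^*(s,g)$ is the minimum number of time steps needed to reach $g$ from $s$, so it is a nonnegative integer and $d^*(s,s)=0$. Let $\phi:\mathcal{S}\to\mathcal{Z}$ be a map into a real Hilbert space with inner product $\langle\cdot,\cdot\rangle$ and induced norm $\|\cdot\|$. Let $N(s):=\{p(s,a):a\in\mathcal{A}\}$ be the set of neighbor states of $s$. For a state $s$ and a goal $g$ define $$z'^*(s,g):=\phi(s)+\frac{\phi(g)-\phi(s)}{\|\phi(g)-\phi(s)\|},$$ $$\hat\pi(s,g):=\arg\max_{a\in\mathcal{A}}\Bigl\langle\phi(s')-\phi(s),\frac{\phi(g)-\phi(s)}{\|\phi(g)-\phi(s)\|}\Bigr\rangle\ \text{ subject to } s'=p(s,a),\ \|\phi(s)-\phi(s')\|\le1,$$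 $$\hat z'(s,g):=\phi\bigl(p(s,\hat\pi(s,g))\bigr).$$ An action $a$ is optimal at $(s,g)$ if it reduces the temporal distance to $g$ by one, i.e. $d^*(p(s,a),g)=d^*(s,g)-1$. *)

From HB Require Import structures.
From mathcomp Require Import all_boot all_order all_algebra.
From mathcomp Require Import reals.
Set Implicit Arguments. Unset Strict Implicit. Unset Printing Implicit Defensive.
Import Order.TTheory GRing.Theory Num.Theory.
Local Open Scope ring_scope.

Section InnerProduct.
Variables (R : realType) (V : lmodType R).

Definition is_inner_product (ip : V -> V -> R) : Prop :=
  [/\ forall x y, ip x y = ip y x,
      forall a x y z, ip (a *: x + y) z = a * ip x z + ip y z,
      forall x, 0 <= ip x x
    & forall x, ip x x = 0 -> x = 0].

Definition ipnorm (ip : V -> V -> R) (x : V) : R := Num.sqrt (ip x x).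

Definition ip_complete (ip : V -> V -> R) : Prop :=
  forall u : nat -> V,
    (forall e : R, 0 < e -> exists N : nat, forall m n : nat,
        (N <= m)%N -> (N <= n)%N -> ipnorm ip (u m - u n) < e) ->
    exists l : V, forall e : R, 0 < e -> exists N : nat, forall n : nat,
        (N <= n)%N -> ipnorm ip (u n - l) < e.

Definition zstar {S : Type} (ip : V -> V -> R) (phi : S -> V) (s g : S) : V :=
  phi s + (ipnorm ip (phi g - phi s))^-1 *: (phi g - phi s).

End InnerProduct.

Section MDP.
Variables (S A : Type) (p : S -> A -> S).

Definition reach_in (s g : S) (n : nat) : Prop :=
  exists l : seq A, size l = n /\ foldl p s l = g.

Definition is_optimal_temporal_distance (d : S -> S -> nat) : Prop :=
  forall s g, reach_in s g (d s g) /\ (forall m, reach_in s g m -> (d s g <= m)%N).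

End MDP.

Section Policy.
Variables (R : realType) (V : lmodType R) (S A : Type) (p : S -> A -> S).
Variables (ip : V -> V -> R) (phi : S -> V).

Definition hat_objective (s g : S) (a : A) : R :=
  ip (phi (p s a) - phi s) ((ipnorm ip (phi g - phi s))^-1 *: (phi g - phi s)).

Definition hat_feasible (s : S) (a : A) : Prop :=
  ipnorm ip (phi s - phi (p s a)) <= 1.

Definition is_hat_pi (s g : S) (a : A) : Prop :=
  hat_feasible s a /\ (forall b, hat_feasible s b -> hat_objective s g b <= hat_objective s g a).

End Policy.

(** The learned step lands within [eps_d] of [z'^*(s,g)], the point at
    embedding distance [1] from [phi s] towards [phi g]; hence
    [||phi s' - phi g|| <= | ||phi s - phi g|| - 1 | + eps_d].  Reading both
    embedding distances as temporal distances up to [eps_e] gives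
    [d(s',g) <= d(s,g) - 1 + 2 eps_e + eps_d < d(s,g)], while a single step can
    never decrease the temporal distance by more than one. *)

From HB Require Import structures.
From mathcomp Require Import all_boot all_order all_algebra.
From mathcomp Require Import reals.
From mathcomp Require Import ring lra.
Import Order.TTheory GRing.Theory Num.Theory.
Local Open Scope ring_scope.

Section InnerProductSpace.
Context {R : realType} {V : lmodType R} {ip : V -> V -> R}.
Hypothesis ipP : is_inner_product ip.

Lemma ipC x y : ip x y = ip y x.
Proof. by case: ipP. Qed.

Lemma ipDl x y z : ip (x + y) z = ip x z + ip y z.
Proof. by case: ipP => _ lin _ _; have := lin 1 x y z; rewrite scale1r mul1r. Qed.

Lemma ip0l z : ip 0 z = 0.
Proof. by have := ipDl 0 0 z; rewrite addr0 => h; lra. Qed.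

Lemma ipZl c x z : ip (c *: x) z = c * ip x z.
Proof. by case: ipP => _ lin _ _; rewrite -[c *: x]addr0 lin ip0l addr0. Qed.

Lemma ip0r x : ip x 0 = 0.
Proof. by rewrite ipC ip0l. Qed.

Lemma ip_selfD x y : ip (x + y) (x + y) = ip x x + 2 * ip x y + ip y y.
Proof. rewrite !ipDl (ipC x) (ipC y) !ipDl (ipC y x); ring. Qed.

Lemma ip_selfZ c x : ip (c *: x) (c *: x) = c ^+ 2 * ip x x.
Proof. by rewrite ipZl ipC ipZl mulrA expr2. Qed.

Lemma ip_CauchySchwarz x y : ip x y ^+ 2 <= ip x x * ip y y.
Proof.
case: ipP => _ _ ip_ge0 ip_eq0.
have [yy0|yy_neq0] := eqVneq (ip y y) 0.
  by rewrite (ip_eq0 _ yy0) !ip0r expr0n mulr0.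
have yy_gt0 : 0 < ip y y by rewrite lt_def yy_neq0 ip_ge0.
(* expand [0 <= ip v v] at the minimiser [v = x - (ip x y / ip y y) y] *)
have := ip_ge0 (x + (- ip x y / ip y y) *: y).
rewrite ip_selfD ip_selfZ (ipC x (_ *: y)) ipZl (ipC y x) => expansion_ge0.
rewrite -subr_ge0.
have -> : ip x x * ip y y - ip x y ^+ 2 =
  (ip x x + 2 * (- ip x y / ip y y * ip x y)
     + (- ip x y / ip y y) ^+ 2 * ip y y) * ip y y.
  by field.
exact: mulr_ge0 expansion_ge0 (ltW yy_gt0).
Qed.

Lemma ipnormD x y : ipnorm ip (x + y) <= ipnorm ip x + ipnorm ip y.
Proof.
case: ipP => _ _ ip_ge0 _; rewrite /ipnorm.
set nx := Num.sqrt (ip x x); set ny := Num.sqrt (ip y y).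
have nx_ge0 : 0 <= nx := sqrtr_ge0 _.
have ny_ge0 : 0 <= ny := sqrtr_ge0 _.
have xy_le : ip x y <= nx * ny.
  apply: le_trans (ler_norm _) _.
  by rewrite -sqrtr_sqr -sqrtrM // ler_sqrt ?mulr_ge0 ?ip_CauchySchwarz.
rewrite -(ger0_norm (addr_ge0 nx_ge0 ny_ge0)) -sqrtr_sqr ler_sqrt ?sqr_ge0 //.
rewrite ip_selfD sqrrD -(sqr_sqrtr (ip_ge0 x)) -(sqr_sqrtr (ip_ge0 y)) -/nx -/ny.
lra.
Qed.

Lemma ipnormZ c x : ipnorm ip (c *: x) = `|c| * ipnorm ip x.
Proof. by rewrite /ipnorm ip_selfZ sqrtrM ?sqr_ge0 // sqrtr_sqr. Qed.

Lemma ipnormN x : ipnorm ip (- x) = ipnorm ip x.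
Proof. by rewrite -scaleN1r ipnormZ normrN normr1 mul1r. Qed.

Lemma ipnormB x y : ipnorm ip (x - y) = ipnorm ip (y - x).
Proof. by rewrite -ipnormN opprB. Qed.

Lemma ipnorm_zstar_sub {S : Type} (phi : S -> V) s g :
  0 < ipnorm ip (phi s - phi g) ->
  ipnorm ip (zstar ip phi s g - phi g) = `|ipnorm ip (phi s - phi g) - 1|.
Proof.
rewrite ipnormB /zstar; set w := phi g - phi s; move=> w_gt0.
have -> : phi s + (ipnorm ip w)^-1 *: w - phi g = ((ipnorm ip w)^-1 - 1) *: w.
  by rewrite scalerBl scale1r /w addrAC addrC opprB.
rewrite ipnormZ -{2}(gtr0_norm w_gt0) -normrM.
by rewrite mulrBl mulVf ?gt_eqF // mul1r distrC.
Qed.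

Lemma ipnorm_sub_goal_le {S : Type} (phi : S -> V) s g x :
  0 < ipnorm ip (phi s - phi g) ->
  ipnorm ip (x - phi g) <=
    `|ipnorm ip (phi s - phi g) - 1| + ipnorm ip (zstar ip phi s g - x).
Proof.
move=> sg_gt0; rewrite -ipnorm_zstar_sub // (ipnormB _ x).
have -> : x - phi g = (zstar ip phi s g - phi g) + (x - zstar ip phi s g).
  by rewrite [RHS]addrC addrA subrK.
exact: ipnormD.
Qed.

End InnerProductSpace.

Section TemporalDistance.
Context {S A : Type} {p : S -> A -> S} {d : S -> S -> nat}.
Hypothesis dP : is_optimal_temporal_distance p d.

Lemma dist_gt0 s g : s <> g -> (0 < d s g)%N.
Proof.
case: (dP s g) => -[[|? ?] [size_l reach]] _ sg; last by rewrite -size_l.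
by case: sg.
Qed.

Lemma dist_le_step s a g : (d s g <= (d (p s a) g).+1)%N.
Proof.
case: (dP (p s a) g) => -[l [size_l reach]] _.
by case: (dP s g) => _; apply; exists (a :: l); rewrite /= size_l.
Qed.

Lemma dist_step_optimal s a g :
  (d (p s a) g < d s g)%N -> d s g = (d (p s a) g).+1.
Proof. by move=> lt_step; apply/eqP; rewrite eqn_leq dist_le_step lt_step. Qed.

End TemporalDistance.

Theorem theoremC1 (R : realType) (V : lmodType R) (ip : V -> V -> R)
  (Hip : is_inner_product ip) (Hcomplete : ip_complete ip)
  (S A : Type) (p : S -> A -> S) (d : S -> S -> nat)
  (Hd : is_optimal_temporal_distance p d)
  (phi : S -> V) (s g : S) (eps_e eps_d : R) (a : A) :
  s <> g ->
  (forall s', (s' = s \/ exists b : A, s' = p s b) ->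
     `| (d s' g)%:R - ipnorm ip (phi s' - phi g) | <= eps_e) ->
  is_hat_pi p ip phi s g a ->
  ipnorm ip (zstar ip phi s g - phi (p s a)) <= eps_d ->
  4 * eps_e + eps_d < 1 ->
  ((d (p s a) g)%:R = (d s g)%:R - 1 :> R).
Proof.
(* Only the distance of the chosen step to [z'^*] matters, not that it is an argmax. *)
move=> sg embed_err _ move_err eps_lt1.
have /ler_normlP[err_s1 err_s2] := embed_err s (or_introl erefl).
have /ler_normlP[err_s'1 err_s'2] :=
  embed_err (p s a) (or_intror (ex_intro _ a erefl)).
have d_ge1 : 1 <= (d s g)%:R :> R by rewrite ler1n (dist_gt0 Hd _ _ sg).
have move_ge0 : 0 <= ipnorm ip (zstar ip phi s g - phi (p s a)).
  exact: sqrtr_ge0.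
have sg_gt0 : 0 < ipnorm ip (phi s - phi g) by lra.
have next_le := ipnorm_sub_goal_le Hip phi s g (phi (p s a)) sg_gt0.
have dist_sg_1_le :
  `|ipnorm ip (phi s - phi g) - 1| <= (d s g)%:R - 1 + eps_e.
  by apply/ler_normlP; split; lra.
have /(dist_step_optimal Hd) -> : (d (p s a) g < d s g)%N.
  by rewrite -(ltr_nat R); lra.
by rewrite -addn1 natrD addrK.
Qed.
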